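(* Let $n\ge0$ be an integer, $\kappa\ge0$, and suppose each arc travel time function has the form $t_a(\mathbf v)=\sum_{m=0}^nb_{am}\big(\sum_{e\in\mathcal A}d_{aem}v_e\big)^m$ with constants $b_{am}\ge0$, $d_{aem}\ge0$. If $\mathbf f^0\in\mathbf F$ is a PRUE flow, then $(1+\kappa)\mathbf f^0$ is a $\sigma$-MSatUE flow in $\mathbf F_{1+\kappa}$ (i.e. for the demands $(1+\kappa)Q_w$), where $\sigma=(1+\kappa)^n-1$. In particular, when $n=1$, $\sigma=\kappa$.
   Context: Let $G=(\mathcal N,\mathcal A)$ be a finite directed graph and $\mathcal W$ a finite set of OD pairs; each $w$ has demand $Q_w>0$ and a finite set $\mathcal P_w$ of paths from its origin to its destination; $\mathcal P=\bigcup_w\mathcal P_w$; $\delta^p_a=1$ if arc $a$ lies on path $p$, else $0$. $\mathbf F=\{\mathbf f\ge0:\sum_{p\in\mathcal P_w}f_p=Q_w\ \forall w\}$, $\mathbf F_{1+\kappa}=\{(1+\kappa)\mathbf f:\mathbf f\in\mathbf F\}$. Arc flow $v_a=\sum_p\delta^p_af_p$; path travel time $c_p(\mathbf f)=\sum_a\delta^p_at_a(\mathbf v)$. A feasible flow (in the relevant set) is a PRUE if for all $w$, $p\in\mathcal P_w$: $f_p>0\implies c_p(\mathbf f)=\min_{p'\in\mathcal P_w}c_{p'}(\mathbf f)$; for $\sigma\ge0$ it is a $\sigma$-MSatUE if $f_p>0\implies c_p(\mathbf f)\le(1+\sigma)\min_{p'\in\mathcal P_w}c_{p'}(\mathbf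 f)$. *)

From mathcomp Require Import all_boot all_order all_algebra.
Set Implicit Arguments. Unset Strict Implicit. Unset Printing Implicit Defensive.
Import Order.TTheory GRing.Theory Num.Theory.
Local Open Scope ring_scope.

(* A network: arcs [A], OD pairs [W], paths [P] (a finite type).  Each path
   p belongs to exactly one OD pair [od p], so P_w = [pred p | od p == w].
   [delta p a] is the path–arc incidence. *)

Section Network.
Variables (R : realFieldType) (A W P : finType).
Variable od : P -> W.
Variable delta : P -> A -> bool.

Definition arc_flow (f : P -> R) (a : A) : R :=
  \sum_(p : P | delta p a) f p.

Definition path_cost (t : A -> (A -> R) -> R) (f : P -> R) (p : P) : R :=
  \sum_(a : A | delta p a) t a (arc_flow f).

(* feasible set F_c = { f >= 0 : sum_{p in P_w} f_p = c * Q_w } ;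
   F = F_1, F_{1+kappa} = scaled demands *)
Definition feasible (Q : W -> R) (c : R) (f : P -> R) : Prop :=
  (forall p, 0 <= f p) /\ (forall w, \sum_(p : P | od p == w) f p = c * Q w).

Definition PRUE (t : A -> (A -> R) -> R) (f : P -> R) : Prop :=
  forall p, 0 < f p ->
    forall p', od p' = od p -> path_cost t f p <= path_cost t f p'.

Definition MSatUE (sigma : R) (t : A -> (A -> R) -> R) (f : P -> R) : Prop :=
  forall p, 0 < f p ->
    forall p', od p' = od p -> path_cost t f p <= (1 + sigma) * path_cost t f p'.

End Network.

Definition poly_time (R : realFieldType) (A : finType) (n : nat)
  (b : A -> nat -> R) (d : A -> A -> nat -> R) : A -> (A -> R) -> R :=
  fun a v => \sum_(0 <= m < n.+1) b a m * (\sum_(e : A) d a e m * v e) ^+ m.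

From mathcomp Require Import all_boot all_order all_algebra.
Set Implicit Arguments. Unset Strict Implicit. Unset Printing Implicit Defensive.
Import Order.TTheory GRing.Theory Num.Theory.
Local Open Scope ring_scope.

(* Scaling every path flow by c = 1 + kappa >= 1 scales every arc flow, hence
   the argument of each monomial of t_a, by c.  A polynomial of degree at most
   n with nonnegative coefficients then grows by a factor between 1 and c^n,
   so every path cost lies between its PRUE value and c^n times it.  Hence a
   used path costs at most c^n times its old cost, which is at most c^n times
   the old cost of any competitor, which is at most c^n times the new cost of
   that competitor. *)

Section PolynomialScaling.
Variable R : realFieldType.
Implicit Types (c : R) (coef y : nat -> R).

Lemma sum_pow_scale_ge coef y c n :
  1 <= c -> (forall m, 0 <= y m) -> (forall m, 0 <= coef m) ->
  \sum_(0 <= m < n.+1) coef m * y m ^+ m <=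
  \sum_(0 <= m < n.+1) coef m * (c * y m) ^+ m.
Proof.
move=> c_ge1 y_ge0 coef_ge0; apply: ler_sum => m _.
by rewrite exprMn mulrCA ler_peMl ?exprn_ege1 ?mulr_ge0 ?exprn_ge0.
Qed.

Lemma sum_pow_scale_le coef y c n :
  1 <= c -> (forall m, 0 <= y m) -> (forall m, 0 <= coef m) ->
  \sum_(0 <= m < n.+1) coef m * (c * y m) ^+ m <=
  c ^+ n * \sum_(0 <= m < n.+1) coef m * y m ^+ m.
Proof.
move=> c_ge1 y_ge0 coef_ge0; rewrite mulr_sumr !big_mkord.
apply: ler_sum => m _; rewrite exprMn mulrCA.
by rewrite ler_wpM2r ?mulr_ge0 ?exprn_ge0 // ler_weXn2l // -ltnS.
Qed.

Lemma poly_time_scale (A : finType) n (b : A -> nat -> R) (d : A -> A -> nat -> R)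
    a c (v w : A -> R) :
  (forall e, w e = c * v e) ->
  poly_time n b d a w =
  \sum_(0 <= m < n.+1) b a m * (c * \sum_e d a e m * v e) ^+ m.
Proof.
move=> w_scaled; apply: eq_bigr => m _; congr (_ * _ ^+ _).
by rewrite mulr_sumr; apply: eq_bigr => e _; rewrite w_scaled mulrCA.
Qed.

End PolynomialScaling.

Section FlowScaling.
Variables (R : realFieldType) (A W P : finType).
Variables (od : P -> W) (delta : P -> A -> bool).
Implicit Types (f g : P -> R) (c k : R).

Lemma arc_flow_scale c f a :
  arc_flow delta (fun p => c * f p) a = c * arc_flow delta f a.
Proof. by rewrite /arc_flow mulr_sumr. Qed.

Lemma arc_flow_ge0 f a : (forall p, 0 <= f p) -> 0 <= arc_flow delta f a.
Proof. by move=> f_ge0; apply: sumr_ge0. Qed.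

Lemma feasible_scale Q c k f :
  0 <= k -> feasible od Q c f -> feasible od Q (k * c) (fun p => k * f p).
Proof.
move=> k_ge0 [f_ge0 f_demand]; split=> [p|w]; first exact: mulr_ge0.
by rewrite -mulr_sumr f_demand mulrA.
Qed.

Lemma MSatUE_of_cost_sandwich t f g s :
  0 <= s -> (forall p, 0 < g p -> 0 < f p) ->
  (forall p, path_cost delta t f p <= path_cost delta t g p) ->
  (forall p, path_cost delta t g p <= s * path_cost delta t f p) ->
  PRUE od delta t f -> MSatUE od delta (s - 1) t g.
Proof.
move=> s_ge0 g_supp cost_ge cost_le f_eq p /g_supp fp_gt0 p' same_od.
rewrite addrC subrK (le_trans (cost_le p)) //.
by rewrite (le_trans _ (ler_wpM2l s_ge0 (cost_ge p'))) // ler_wpM2l // f_eq.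
Qed.

Variables (n : nat) (b : A -> nat -> R) (d : A -> A -> nat -> R).
Hypotheses (b_ge0 : forall a m, 0 <= b a m) (d_ge0 : forall a e m, 0 <= d a e m).

Let inner_ge0 f a m :
  (forall p, 0 <= f p) -> 0 <= \sum_e d a e m * arc_flow delta f e.
Proof. by move=> f_ge0; apply: sumr_ge0 => e _; rewrite mulr_ge0 ?arc_flow_ge0. Qed.

Lemma path_cost_scale_ge c f p :
  1 <= c -> (forall p, 0 <= f p) ->
  path_cost delta (poly_time n b d) f p <=
  path_cost delta (poly_time n b d) (fun q => c * f q) p.
Proof.
move=> c_ge1 f_ge0; apply: ler_sum => a _.
rewrite (poly_time_scale n b d a (arc_flow_scale c f)).
by apply: sum_pow_scale_ge => // m; apply: inner_ge0.
Qed.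

Lemma path_cost_scale_le c f p :
  1 <= c -> (forall p, 0 <= f p) ->
  path_cost delta (poly_time n b d) (fun q => c * f q) p <=
  c ^+ n * path_cost delta (poly_time n b d) f p.
Proof.
move=> c_ge1 f_ge0; rewrite /path_cost mulr_sumr; apply: ler_sum => a _.
rewrite (poly_time_scale n b d a (arc_flow_scale c f)).
by apply: sum_pow_scale_le => // m; apply: inner_ge0.
Qed.

End FlowScaling.

Theorem lemma8 (R : realFieldType) (A W P : finType) (od : P -> W)
  (delta : P -> A -> bool) (Q : W -> R) (n : nat) (kappa : R)
  (b : A -> nat -> R) (d : A -> A -> nat -> R) (f0 : P -> R) :
  (forall w, 0 < Q w) ->
  0 <= kappa ->
  (forall a m, 0 <= b a m) ->
  (forall a e m, 0 <= d a e m) ->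
  feasible od Q 1 f0 ->
  PRUE od delta (poly_time n b d) f0 ->
  feasible od Q (1 + kappa) (fun p => (1 + kappa) * f0 p) /\
  MSatUE od delta ((1 + kappa) ^+ n - 1) (poly_time n b d)
    (fun p => (1 + kappa) * f0 p).
Proof.
move=> _ kappa_ge0 b_ge0 d_ge0 f0_feasible f0_PRUE.
have c_ge1 : 1 <= 1 + kappa by rewrite lerDl.
have c_gt0 : 0 < 1 + kappa := lt_le_trans ltr01 c_ge1.
have [f0_ge0 _] := f0_feasible.
split.
  by have := feasible_scale (ltW c_gt0) f0_feasible; rewrite mulr1.
apply: MSatUE_of_cost_sandwich f0_PRUE.
- exact: exprn_ge0 (ltW c_gt0).
- by move=> p; rewrite pmulr_rgt0.
- by move=> p; apply: path_cost_scale_ge.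
- by move=> p; apply: path_cost_scale_le.
Qed.
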